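(* Let $k$ be a field, $Q=k[x,y,z]$, $\mathfrak m=(x,y,z)$, and let $I\subseteq\mathfrak m^2$ be a homogeneous integrally closed ideal. Then $[I:x]\cdot[I:(y,z)]\subseteq I$.
   Context: For ideals $I,L$ of $Q$, $I:L=\{f\in Q: fL\subseteq I\}$ and $I:f=I:(f)$. An ideal is integrally closed if it equals its integral closure. *)

(* Q = k[x,y,z] is modelled as {poly {poly {poly k}}}:
   x is the outer variable, y the middle one, z the innermost. *)
From HB Require Import structures.
From mathcomp Require Import all_boot all_order all_algebra.
Set Implicit Arguments. Unset Strict Implicit. Unset Printing Implicit Defensive.
Import GRing.Theory.
Local Open Scope ring_scope.

Section Defs.
Variable k : fieldType.

Definition Q := {poly {poly {poly k}}}.

Definition vx : Q := 'X.
Definition vy : Q := ('X)%:P.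
Definition vz : Q := ('X)%:P%:P.

Definition coef3 (p : Q) (a b c : nat) : k := ((p`_a)`_b)`_c.

Definition mono3 (a b c : nat) : Q := vx ^+ a * vy ^+ b * vz ^+ c.

Definition hcomp (d : nat) (p : Q) : Q :=
  \sum_(a < d.+1) \sum_(b < d.+1 - a)
     (coef3 p a b (d - a - b))%:P%:P%:P * mono3 a b (d - a - b).

Definition is_ideal (I : Q -> Prop) : Prop :=
  I 0 /\ (forall f g, I f -> I g -> I (f + g)) /\ (forall r f, I f -> I (r * f)).

Definition homogeneous_ideal (I : Q -> Prop) : Prop :=
  forall f, I f -> forall d, I (hcomp d f).

Definition subset_ideal (I J : Q -> Prop) : Prop := forall f, I f -> J f.

Definition ideal_mul (I J : Q -> Prop) (f : Q) : Prop :=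
  exists s : seq (Q * Q),
    (forall p, p \in s -> I p.1 /\ J p.2) /\ f = \sum_(p <- s) p.1 * p.2.

Fixpoint ideal_pow (I : Q -> Prop) (n : nat) : Q -> Prop :=
  match n with
  | 0 => fun _ => True
  | n.+1 => ideal_mul (ideal_pow I n) I
  end.

Definition ideal1 (a : Q) (f : Q) : Prop := exists u, f = u * a.
Definition ideal2 (a b : Q) (f : Q) : Prop := exists u v, f = u * a + v * b.
Definition ideal3 (a b c : Q) (f : Q) : Prop :=
  exists u v w, f = u * a + v * b + w * c.

Definition maxideal : Q -> Prop := ideal3 vx vy vz.

Definition colon (I L : Q -> Prop) (f : Q) : Prop := forall g, L g -> I (f * g).

Definition integral_over (I : Q -> Prop) (f : Q) : Prop :=
  exists (n : nat) (a : nat -> Q),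
    (0 < n)%N /\ (forall i, (1 <= i <= n)%N -> ideal_pow I i (a i)) /\
    f ^+ n + \sum_(1 <= i < n.+1) a i * f ^+ (n - i) = 0.

Definition integral_closure (I : Q -> Prop) : Q -> Prop := integral_over I.

Definition integrally_closed (I : Q -> Prop) : Prop :=
  forall f, integral_closure I f <-> I f.

End Defs.

From Pilot Require Import Defs.
From HB Require Import structures.
From mathcomp Require Import all_boot all_order all_algebra.
From mathcomp Require Import ring.
Local Open Scope ring_scope.
Import GRing.Theory.

(* Let f be in I : x and g in I : (y, z).  Since I lies in m^2,
   the relations f x, g y in m^2 force f, g in m: an element of m^2 has no
   linear monomials, so its coefficients on x and on y vanish, and these are
   the constant terms of f and g respectively.  Writing f = f1 x + f2 y + f3 z
   and g = g1 x + g2 y + g3 z we get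
     (fg) x = g1 (fx) x + g2 (fx) y + g3 (fx) z,
     (fg) y = f1 (gy) x + f2 (gy) y + f3 (gy) z,
     (fg) z = f1 (gz) x + f2 (gz) y + f3 (gz) z,
   all coefficients lying in I.  By the determinant trick (Cayley-Hamilton for
   a 3 x 3 matrix with entries in I, multiplied against the nonzero vector
   (x, y, z)), fg is integral over I, hence in I as I is integrally closed. *)

Lemma poly_const_split {R : nzRingType} (p : {poly R}) :
  p = (p`_0)%:P + drop_poly 1 p * 'X.
Proof.
rewrite -{1}(poly_take_drop 1 p) expr1; congr (_ + _).
by apply/polyP => i; rewrite coef_take_poly coefC; case: i.
Qed.

(* The coefficients of det (t - A) = t^3 + c1 t^2 + c2 t + c3 for a 3 x 3
   matrix A = (a_ij) over a commutative ring: c_i is a form of degree i in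
   the entries of A. *)
Section CharacteristicPolynomial3.
Context {R : comPzRingType}.
Variables (a11 a12 a13 a21 a22 a23 a31 a32 a33 : R).

Definition char3_c1 : R := - (a11 + a22 + a33).
Definition char3_c2 : R :=
  a11 * a22 - a12 * a21 + (a11 * a33 - a13 * a31) + (a22 * a33 - a23 * a32).
Definition char3_c3 : R :=
  - (a11 * a22 * a33 - a11 * a23 * a32 - a12 * a21 * a33 + a12 * a23 * a31
     + a13 * a21 * a32 - a13 * a22 * a31).

End CharacteristicPolynomial3.

Lemma char3_eigen_annihilates {R : comPzRingType}
    {a11 a12 a13 a21 a22 a23 a31 a32 a33 h x y z : R} :
  h * x = a11 * x + a12 * y + a13 * z ->
  h * y = a21 * x + a22 * y + a23 * z ->
  h * z = a31 * x + a32 * y + a33 * z ->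
  (h ^+ 3 + char3_c1 a11 a22 a33 * h ^+ 2
   + char3_c2 a11 a12 a13 a21 a22 a23 a31 a32 a33 * h
   + char3_c3 a11 a12 a13 a21 a22 a23 a31 a32 a33) * x = 0.
Proof.
move=> Ex Ey Ez.
(* expand along the first row of the adjugate of h - (a_ij) *)
transitivity ((h * x - (a11 * x + a12 * y + a13 * z)) * ((h - a22) * (h - a33) - a23 * a32)
      + (h * y - (a21 * x + a22 * y + a23 * z)) * (a12 * (h - a33) + a13 * a32)
      + (h * z - (a31 * x + a32 * y + a33 * z)) * (a12 * a23 + a13 * (h - a22))).
  by rewrite /char3_c1 /char3_c2 /char3_c3; ring.
by rewrite Ex Ey Ez !subrr !mul0r !addr0.
Qed.

Section PolynomialsInThreeVariables.
Variable k : fieldType.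
Local Notation Q := (Q k).
Local Notation vx := (@vx k).
Local Notation vy := (@vy k).
Local Notation vz := (@vz k).
Local Notation m := (@maxideal k).

Lemma coef3_0 a b c : coef3 (0 : Q) a b c = 0.
Proof. by rewrite /coef3 !coef0. Qed.

Lemma coef3D (p q : Q) a b c : coef3 (p + q) a b c = coef3 p a b c + coef3 q a b c.
Proof. by rewrite /coef3 !coefD. Qed.

Lemma coef3_000M (p q : Q) : coef3 (p * q) 0 0 0 = coef3 p 0 0 0 * coef3 q 0 0 0.
Proof. by rewrite /coef3 !coef0M. Qed.

Lemma maxidealP (f : Q) : m f <-> coef3 f 0 0 0 = 0.
Proof.
split.
  case=> u [v [w ->]]; rewrite !coef3D !coef3_000M.
  have -> : coef3 vx 0 0 0 = 0 by rewrite /coef3 /Defs.vx coefX !coef0.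
  have -> : coef3 vy 0 0 0 = 0 by rewrite /coef3 /Defs.vy coefC coefX coef0.
  have -> : coef3 vz 0 0 0 = 0 by rewrite /coef3 /Defs.vz !coefC coefX.
  by rewrite !mulr0 !addr0.
rewrite /coef3 => f000.
(* peel off successively the parts divisible by x, by y and by z *)
have Ez : f`_0`_0 = 0%:P + drop_poly 1 (f`_0`_0) * 'X by rewrite -f000 -poly_const_split.
have Ey := poly_const_split f`_0.
have Ex := poly_const_split f.
exists (drop_poly 1 f), (drop_poly 1 f`_0)%:P, (drop_poly 1 f`_0`_0)%:P%:P.
rewrite /Defs.vx /Defs.vy /Defs.vz {1}Ex {1}Ey {1}Ez !rmorphD !rmorphM /= !rmorph0.
ring.
Qed.

Lemma coef3_linear_mul {p q : Q} :
  coef3 p 0 0 0 = 0 -> coef3 q 0 0 0 = 0 ->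
  coef3 (p * q) 1 0 0 = 0 /\ coef3 (p * q) 0 1 0 = 0.
Proof.
rewrite /coef3 => p0 q0; split.
  by rewrite coefM big_ord_recr /= big_ord1 /= !coefD !coef0M p0 q0 !mul0r mulr0 addr0.
by rewrite coef0M coefM big_ord_recr /= big_ord1 /= !coefD !coef0M p0 q0 !mul0r mulr0 addr0.
Qed.

Lemma coef3_sum_vanishes (s : seq (Q * Q)) a b c :
  (forall p, p \in s -> coef3 (p.1 * p.2) a b c = 0) ->
  coef3 (\sum_(p <- s) p.1 * p.2) a b c = 0.
Proof.
move=> terms0; rewrite big_seq.
apply: (big_ind (fun p => coef3 p a b c = 0)) => [|p q p0 q0|//].
  exact: coef3_0.
by rewrite coef3D p0 q0 addr0.
Qed.

Lemma maxideal2_linear_coef (f : Q) :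
  ideal_pow m 2 f -> coef3 f 1 0 0 = 0 /\ coef3 f 0 1 0 = 0.
Proof.
case=> s [Hs ->].
have factors_in_m p : p \in s -> coef3 p.1 0 0 0 = 0 /\ coef3 p.2 0 0 0 = 0.
  move=> /Hs [[t [Ht ->]] /maxidealP mp2]; split => //.
  by apply: coef3_sum_vanishes => q /Ht [_ /maxidealP mq]; rewrite coef3_000M mq mulr0.
by split; apply: coef3_sum_vanishes => p /factors_in_m [p1 p2];
  case: (coef3_linear_mul p1 p2).
Qed.

Lemma colon_x_maxideal {f : Q} : ideal_pow m 2 (f * vx) -> m f.
Proof.
case/maxideal2_linear_coef => fx _; apply/maxidealP.
by move: fx; rewrite /coef3 /Defs.vx coefMX.
Qed.

Lemma colon_y_maxideal {f : Q} : ideal_pow m 2 (f * vy) -> m f.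
Proof.
case/maxideal2_linear_coef => _ fy; apply/maxidealP.
by move: fy; rewrite /coef3 /Defs.vy coefMC coefMX.
Qed.

Section IdealsOfQ.
Variable I : Q -> Prop.
Hypothesis I_ideal : is_ideal I.

Lemma ideal_pow_mulr n a b : ideal_pow I n a -> I b -> ideal_pow I n.+1 (a * b).
Proof.
move=> Ha Hb; exists [:: (a, b)]; split; last by rewrite big_seq1.
by move=> p; rewrite inE => /eqP ->.
Qed.

Lemma ideal_powD n a b :
  ideal_pow I n.+1 a -> ideal_pow I n.+1 b -> ideal_pow I n.+1 (a + b).
Proof.
move=> [s [Hs ->]] [t [Ht ->]]; exists (s ++ t); split; last by rewrite big_cat.
by move=> p; rewrite mem_cat => /orP [/Hs | /Ht].
Qed.

Lemma ideal_powN n a : ideal_pow I n.+1 a -> ideal_pow I n.+1 (- a).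
Proof.
have [_ [_ I_mul]] := I_ideal.
move=> [s [Hs ->]]; exists [seq (p.1, -1 * p.2) | p <- s]; split.
  by move=> p /mapP [q /Hs [H1 H2] ->]; split => //=; apply: I_mul.
by rewrite big_map -sumrN; apply: eq_bigr => p _ /=; ring.
Qed.

Lemma ideal_pow1 a : I a -> ideal_pow I 1 a.
Proof. by move=> Ia; rewrite -[a]mul1r; apply: ideal_pow_mulr. Qed.

Lemma ideal_pow2 a b : I a -> I b -> ideal_pow I 2 (a * b).
Proof. by move=> Ia Ib; apply: ideal_pow_mulr => //; apply: ideal_pow1. Qed.

Lemma ideal_pow3 a b c : I a -> I b -> I c -> ideal_pow I 3 (a * b * c).
Proof. by move=> Ia Ib Ic; apply: ideal_pow_mulr => //; apply: ideal_pow2. Qed.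

(* The determinant trick: if h (x, y, z) = A (x, y, z) with x != 0 and all
   entries of A in I, then h is integral over I, an integral equation being
   the characteristic polynomial of A. *)
Lemma integral_of_eigenvector (h x y z a11 a12 a13 a21 a22 a23 a31 a32 a33 : Q) :
  x != 0 ->
  I a11 -> I a12 -> I a13 -> I a21 -> I a22 -> I a23 -> I a31 -> I a32 -> I a33 ->
  h * x = a11 * x + a12 * y + a13 * z ->
  h * y = a21 * x + a22 * y + a23 * z ->
  h * z = a31 * x + a32 * y + a33 * z ->
  integral_over I h.
Proof.
move=> x0 I11 I12 I13 I21 I22 I23 I31 I32 I33 Ex Ey Ez.
pose c i := if i == 1%N then char3_c1 a11 a22 a33
            else if i == 2%N then char3_c2 a11 a12 a13 a21 a22 a23 a31 a32 a33
            else char3_c3 a11 a12 a13 a21 a22 a23 a31 a32 a33.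
exists 3%N, c; split => //; split.
  (* c_i is a signed sum of products of i entries of A, hence lies in I^i *)
  case=> [|[|[|[|i]]]] // _; rewrite /c /=.
  - rewrite /char3_c1; apply: (@ideal_powN 0).
    by repeat apply: (@ideal_powD 0); apply: ideal_pow1.
  - rewrite /char3_c2.
    by repeat first [apply: (@ideal_powD 1) | apply: (@ideal_powN 1)]; apply: ideal_pow2.
  - rewrite /char3_c3.
    by repeat first [apply: (@ideal_powD 2) | apply: (@ideal_powN 2)]; apply: ideal_pow3.
rewrite big_nat_recr // big_nat_recr // big_nat1 /= subnn expr0 mulr1 subn1 /= expr1.
apply: (mulIf x0); rewrite mul0r -(char3_eigen_annihilates Ex Ey Ez).
by rewrite !addrA.
Qed.

Lemma colon_product_integral (f g : Q) :
  subset_ideal I (ideal_pow m 2) ->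
  colon I (ideal1 vx) f -> colon I (ideal2 vy vz) g -> integral_over I (f * g).
Proof.
have [_ [_ I_mul]] := I_ideal.
move=> I_m2 Hf Hg.
have Ifx : I (f * vx) by apply: Hf; exists 1; rewrite mul1r.
have Igy : I (g * vy) by apply: Hg; exists 1, 0; rewrite mul1r mul0r addr0.
have Igz : I (g * vz) by apply: Hg; exists 0, 1; rewrite mul1r mul0r add0r.
have [f1 [f2 [f3 Ef]]] := colon_x_maxideal (I_m2 _ Ifx).
have [g1 [g2 [g3 Eg]]] := colon_y_maxideal (I_m2 _ Igy).
apply: (@integral_of_eigenvector (f * g) vx vy vz
   (g1 * (f * vx)) (g2 * (f * vx)) (g3 * (f * vx))
   (f1 * (g * vy)) (f2 * (g * vy)) (f3 * (g * vy))
   (f1 * (g * vz)) (f2 * (g * vz)) (f3 * (g * vz))).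
(* the eigenvector equations come from (fg) x = (fx) g and (fg) y = (gy) f,
   (fg) z = (gz) f, expanding g and f along (x, y, z) *)
- by rewrite /Defs.vx polyX_eq0.
all: try exact: I_mul.
- by rewrite mulrAC {1}Eg; ring.
- by rewrite -mulrA mulrC {1}Ef; ring.
- by rewrite -mulrA mulrC {1}Ef; ring.
Qed.

End IdealsOfQ.
End PolynomialsInThreeVariables.

Theorem mainTheorem9 (k : fieldType) (I : Q k -> Prop) :
  is_ideal I ->
  homogeneous_ideal I ->
  subset_ideal I (ideal_pow (@maxideal k) 2) ->
  integrally_closed I ->
  subset_ideal
    (ideal_mul (colon I (ideal1 (@vx k))) (colon I (ideal2 (@vy k) (@vz k))))
    I.
Proof.
move=> I_ideal _ I_m2 I_closed _ [s [Hs ->]].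
have [I0 [ID _]] := I_ideal.
rewrite big_seq; apply: (big_ind I) => // [[f g]] /Hs [/= Hf Hg].
by apply/I_closed; apply: colon_product_integral.
Qed.
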